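(* Let $M$ be a finite abelian group of exponent greater than $2$ and let $g$ be a proper half-automorphism of $L_M$. Let $g'\in\mathrm{Aut}(K)$ and $u,v\in M$ (with $u^2=v^2=1$) be such that $g(A,1)=(g'(A),\alpha_{(u,v)}(A))$ for all $A\in K$, and let $g''\in\mathrm{Aut}(M)$ be defined by $g(1,x)=(1,g''(x))$ for $x\in M$ (these exist for every half-automorphism). Then $g=F^-_{(g',g'',u,v)}$.
   Context: Let $K=\{1,a,b,c\}$ be the Klein four-group. Set $L_M=K\times M$ with the operation $(A,x)*(B,y)=(AB,xy)$ if $B=1$, and $(A,x)*(B,y)=(AB,x^{-1}y)$ if $B\neq 1$. For $u,v\in M$ with $u^2=v^2=1$, $\alpha_{(u,v)}:K\to M$ is defined by $\alpha_{(u,v)}(1)=1$, $\alpha_{(u,v)}(a)=u$, $\alpha_{(u,v)}(b)=v$, $\alpha_{(u,v)}(c)=uv$. For $f'\in\mathrm{Aut}(K)$, $f''\in\mathrm{Aut}(M)$ define $F^-_{(f',f'',u,v)}(1,x)=(1,f''(x))$ and $F^-_{(f',f'',u,v)}(A,x)=(f'(A),f''(x^{-1})\alpha_{(u,v)}(A))$ for $A\neq 1$. A half-automorphism of a loop $L$ is a bijection $f:L\to L$ with $f(XY)\in\{f(X)f(Y),f(Y)f(X)\}$ for all $X,Y$; it is proper if it is neither an automorphism nor an anti-automorphism. *)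

From mathcomp Require Import all_boot all_fingroup all_solvable.
Set Implicit Arguments. Unset Strict Implicit. Unset Printing Implicit Defensive.
Import GroupScope.
Local Open Scope group_scope.

Inductive Klein : Type := K1 | Ka | Kb | Kc.

Definition kmul (A B : Klein) : Klein :=
  match A, B with
  | K1, X | X, K1 => X
  | Ka, Ka | Kb, Kb | Kc, Kc => K1
  | Ka, Kb | Kb, Ka => Kc
  | Ka, Kc | Kc, Ka => Kb
  | Kb, Kc | Kc, Kb => Ka
  end.

Definition is_autK (f : Klein -> Klein) : Prop :=
  bijective f /\ forall A B, f (kmul A B) = kmul (f A) (f B).

Definition is_autM (gT : finGroupType) (f : gT -> gT) : Prop :=
  bijective f /\ forall x y : gT, f (x * y) = f x * f y.

Definition LM (gT : finGroupType) : Type := (Klein * gT)%type.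

Definition LMmul (gT : finGroupType) (X Y : LM gT) : LM gT :=
  match X, Y with
  | (A, x), (B, y) =>
    match B with
    | K1 => (kmul A B, x * y)
    | _ => (kmul A B, x^-1 * y)
    end
  end.

Definition alpha (gT : finGroupType) (u v : gT) (A : Klein) : gT :=
  match A with
  | K1 => 1
  | Ka => u
  | Kb => v
  | Kc => u * v
  end.

Definition Fminus (gT : finGroupType) (f' : Klein -> Klein) (f'' : gT -> gT)
    (u v : gT) (X : LM gT) : LM gT :=
  match X with
  | (K1, x) => (K1, f'' x)
  | (A, x) => (f' A, f'' (x^-1) * alpha u v A)
  end.

Definition is_half_aut (gT : finGroupType) (f : LM gT -> LM gT) : Prop :=
  bijective f /\
  forall X Y, f (LMmul X Y) = LMmul (f X) (f Y) \/ f (LMmul X Y) = LMmul (f Y) (f X).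

Definition is_aut_LM (gT : finGroupType) (f : LM gT -> LM gT) : Prop :=
  bijective f /\ forall X Y, f (LMmul X Y) = LMmul (f X) (f Y).

Definition is_antiaut_LM (gT : finGroupType) (f : LM gT -> LM gT) : Prop :=
  bijective f /\ forall X Y, f (LMmul X Y) = LMmul (f Y) (f X).

Definition is_proper_half_aut (gT : finGroupType) (f : LM gT -> LM gT) : Prop :=
  is_half_aut f /\ ~ is_aut_LM f /\ ~ is_antiaut_LM f.

(* Write F^+ for the map (A, x) |-> (g' A, alpha A * g'' x); it is an automorphism
   of L_M.  Comparing g on (A,1) * (1,x) = (A,x) shows that at every point g agrees
   with F^+ or with F^-, and the two values coincide exactly when g'' x ^+ 2 = 1.
   If g agreed with F^+ but not with F^- at some (A0, x0), then comparing g on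
   (A0,x0) * (1, x0^-1 y) forces g = F^+ on the whole row A0, and comparing g on
   (A0,y) * (B,y) = (A0 B, 1) then forces g = F^+ everywhere; so g would be an
   automorphism, contradicting properness. *)

From mathcomp Require Import all_boot all_fingroup all_solvable.
Set Implicit Arguments. Unset Strict Implicit.
Import GroupScope.
Local Open Scope group_scope.

Lemma K1_or_neq1 A : A = K1 \/ A <> K1.
Proof. by case: A; [left | right..]. Qed.

Lemma kmul1g A : kmul K1 A = A. Proof. by case: A. Qed.
Lemma kmulgg A : kmul A A = K1. Proof. by case: A. Qed.

Lemma LMmul_K1r (gT : finGroupType) A (x y : gT) : LMmul (A, x) (K1, y) = (A, x * y).
Proof. by case: A. Qed.

Lemma LMmul_neq1 (gT : finGroupType) A B (x y : gT) : B <> K1 ->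
  LMmul (A, x) (B, y) = (kmul A B, x^-1 * y).
Proof. by case: B. Qed.

Lemma Fminus_neq1 (gT : finGroupType) f' (f'' : gT -> gT) u v A x : A <> K1 ->
  Fminus f' f'' u v (A, x) = (f' A, f'' x^-1 * alpha u v A).
Proof. by case: A. Qed.

Lemma autK1 (f : Klein -> Klein) : is_autK f -> f K1 = K1.
Proof. by case=> _ fM; have := fM K1 K1; rewrite !kmulgg. Qed.

Lemma autK_neq1 (f : Klein -> Klein) A : is_autK f -> A <> K1 -> f A <> K1.
Proof.
by move=> fK nA fA1; apply/nA/(bij_inj fK.1); rewrite fA1 autK1.
Qed.

Section MorphismFacts.
Variables (gT : finGroupType) (h : gT -> gT).
Hypothesis hM : {morph h : x y / x * y}.

Lemma morphg1 : h 1 = 1.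
Proof. by apply: (mulgI (h 1)); rewrite -hM !mulg1. Qed.

Lemma morphgV x : h x^-1 = (h x)^-1.
Proof. by apply: (mulgI (h x)); rewrite -hM !mulgV morphg1. Qed.

End MorphismFacts.

Lemma expg2_eq1_invg (gT : finGroupType) (x : gT) : x ^+ 2 = 1 -> x^-1 = x.
Proof. by move=> x2; apply/eqP; rewrite eq_invg_mul -expg2 x2. Qed.

Lemma mulg_idr_eq1 (gT : finGroupType) (x c : gT) : x = x * c -> c = 1.
Proof. by move=> e; apply: (mulgI x); rewrite -e mulg1. Qed.

Section Abelian.
Variable gT : finGroupType.
Hypothesis mulgC : forall x y : gT, x * y = y * x.

Lemma mulgCA (x y z : gT) : x * (y * z) = y * (x * z).
Proof. by rewrite !mulgA (mulgC x). Qed.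

Lemma invMg_abelian (x y : gT) : (x * y)^-1 = x^-1 * y^-1.
Proof. by rewrite invMg mulgC. Qed.

Lemma mulg_eq_invg_mul (w a : gT) : w * a = a^-1 * w <-> a ^+ 2 = 1.
Proof.
rewrite (mulgC a^-1); split=> [/mulgI a_inv | /expg2_eq1_invg -> //].
by rewrite expg2 {2}a_inv mulgV.
Qed.

Lemma alpha_expg2 (u v : gT) A : u ^+ 2 = 1 -> v ^+ 2 = 1 -> alpha u v A ^+ 2 = 1.
Proof.
by move=> u2 v2; case: A => //=; rewrite ?expg1n // expgMn ?u2 ?v2 ?mulg1.
Qed.

Lemma alpha_invg (u v : gT) A : u ^+ 2 = 1 -> v ^+ 2 = 1 ->
  (alpha u v A)^-1 = alpha u v A.
Proof. by move=> u2 v2; apply/expg2_eq1_invg/alpha_expg2. Qed.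

Lemma alpha_kmul (u v : gT) A B : u ^+ 2 = 1 -> v ^+ 2 = 1 ->
  alpha u v (kmul A B) = alpha u v A * alpha u v B.
Proof.
move=> u2 v2; have uu : u * u = 1 by rewrite -expg2.
have vv : v * v = 1 by rewrite -expg2.
case: A; case: B => /=; rewrite ?mul1g ?mulg1 ?uu ?vv //.
- by rewrite mulgA uu mul1g.
- by rewrite mulgCA vv mulg1.
- by rewrite mulgC mulgA uu mul1g.
- by rewrite -mulgA vv mulg1.
- by rewrite -expg2 expgMn ?u2 ?v2 ?mulg1 //; exact: mulgC.
Qed.

End Abelian.

Definition Fplus (gT : finGroupType) (f' : Klein -> Klein) (f'' : gT -> gT)
    (u v : gT) (X : LM gT) : LM gT :=
  (f' X.1, alpha u v X.1 * f'' X.2).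

Section Fplus.
Variables (gT : finGroupType) (f' : Klein -> Klein) (f'' : gT -> gT) (u v : gT).
Hypotheses (mulgC : forall x y : gT, x * y = y * x) (u2 : u ^+ 2 = 1) (v2 : v ^+ 2 = 1).
Hypotheses (f'_aut : is_autK f') (f''M : {morph f'' : x y / x * y}).

Lemma Fplus_K1 x : Fplus f' f'' u v (K1, x) = (K1, f'' x).
Proof. by rewrite /Fplus /= autK1 // mul1g. Qed.

Lemma Fplus_eq_Fminus A x : A <> K1 ->
  Fplus f' f'' u v (A, x) = Fminus f' f'' u v (A, x) <-> f'' x ^+ 2 = 1.
Proof.
move=> nA; rewrite Fminus_neq1 // /Fplus /= morphgV //.
split=> [[/(mulg_eq_invg_mul mulgC)] // |].
by move/(mulg_eq_invg_mul mulgC (alpha u v A)) ->.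
Qed.

Lemma FplusM X Y :
  Fplus f' f'' u v (LMmul X Y) = LMmul (Fplus f' f'' u v X) (Fplus f' f'' u v Y).
Proof.
case: X Y => [A x] [B y]; have [-> | nB] := K1_or_neq1 B.
  by rewrite LMmul_K1r Fplus_K1 LMmul_K1r /Fplus /= f''M mulgA.
rewrite LMmul_neq1 // /Fplus LMmul_neq1 /=; last exact: autK_neq1 f'_aut nB.
rewrite f'_aut.2 alpha_kmul // f''M morphgV // (invMg_abelian mulgC) alpha_invg //.
by rewrite -!mulgA (mulgCA mulgC (f'' x)^-1 (alpha u v B)).
Qed.

End Fplus.

Section HalfAutomorphism.
Variables (gT : finGroupType) (g : LM gT -> LM gT) (g' : Klein -> Klein)
  (h : gT -> gT) (u v : gT).
Hypotheses (mulgC : forall x y : gT, x * y = y * x) (u2 : u ^+ 2 = 1) (v2 : v ^+ 2 = 1).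
Hypotheses (g'_aut : is_autK g') (hM : {morph h : x y / x * y}).
Hypothesis g_half : forall X Y,
  g (LMmul X Y) = LMmul (g X) (g Y) \/ g (LMmul X Y) = LMmul (g Y) (g X).
Hypotheses (gK : forall A, g (A, 1) = (g' A, alpha u v A))
  (gM : forall x, g (K1, x) = (K1, h x)).

Local Notation Fp := (Fplus g' h u v).
Local Notation Fm := (Fminus g' h u v).

Lemma half_aut_Fplus_or_Fminus X : g X = Fp X \/ g X = Fm X.
Proof.
case: X => A x; have [-> | nA] := K1_or_neq1 A; first by left; rewrite gM Fplus_K1.
have := g_half (A, 1) (K1, x); rewrite LMmul_K1r mul1g gK gM LMmul_K1r.
rewrite LMmul_neq1 ?kmul1g; last exact: autK_neq1 g'_aut nA.
by case=> ->; [left | right; rewrite Fminus_neq1 // morphgV].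
Qed.

Lemma half_aut_Fplus_on_row A0 x0 : A0 <> K1 -> h x0 ^+ 2 <> 1 ->
  g (A0, x0) = Fp (A0, x0) -> forall y, g (A0, y) = Fp (A0, y).
Proof.
move=> nA0 hx0 gx0 y; have [// | gy] := half_aut_Fplus_or_Fminus (A0, y).
have g'A0 := autK_neq1 g'_aut nA0.
have := g_half (A0, x0) (K1, x0^-1 * y).
rewrite LMmul_K1r mulKVg gy gx0 gM LMmul_K1r Fminus_neq1 // /Fplus LMmul_neq1 //=.
rewrite hM !morphgV //; case=> [[e] | [e]]; first by rewrite e -mulgA mulKVg.
exfalso; apply: hx0; apply: (mulg_idr_eq1 (x := (h y)^-1 * alpha u v A0)).
rewrite {1}e (invMg_abelian mulgC) invgK expg2 -!mulgA.
by rewrite (mulgCA mulgC (h x0)) (mulgCA mulgC (h x0)).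
Qed.

Lemma half_aut_Fplus_from_row A0 : A0 <> K1 ->
  (forall y, g (A0, y) = Fp (A0, y)) -> forall X, g X = Fp X.
Proof.
move=> nA0 row [B y]; have [-> | nB] := K1_or_neq1 B; first by rewrite gM Fplus_K1.
have [// | gB] := half_aut_Fplus_or_Fminus (B, y).
rewrite gB; symmetry; apply/Fplus_eq_Fminus => //.
have g'A0 := autK_neq1 g'_aut nA0; have g'B := autK_neq1 g'_aut nB.
have := g_half (A0, y) (B, y).
rewrite LMmul_neq1 // mulVg gK row gB Fminus_neq1 // /Fplus !LMmul_neq1 //=.
rewrite alpha_kmul // morphgV // !(invMg_abelian mulgC) invgK !alpha_invg //.
case=> [[_ e] | [_ e]].
  move: e; rewrite -!mulgA => /mulgI; rewrite mulgA -invMg -expg2.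
  rewrite -{1}(mul1g (alpha u v B)) => /mulIg /esym /eqP.
  by rewrite invg_eq1 => /eqP.
apply: (mulg_idr_eq1 (x := alpha u v A0 * alpha u v B)).
rewrite {1}e expg2 -!mulgA.
by rewrite (mulgCA mulgC (h y)) (mulgCA mulgC (h y)) (mulgCA mulgC (alpha u v B)).
Qed.

End HalfAutomorphism.

Theorem proposition4p12 (gT : finGroupType)
    (Mab : abelian [set: gT]) (Mexp : (2 < exponent [set: gT])%N)
    (g : LM gT -> LM gT) (Hg : is_proper_half_aut g)
    (g' : Klein -> Klein) (Hg' : is_autK g')
    (u v : gT) (Hu : u ^+ 2 = 1) (Hv : v ^+ 2 = 1)
    (HgK : forall A : Klein, g (A, 1) = (g' A, alpha u v A))
    (g'' : gT -> gT) (Hg'' : is_autM g'')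
    (HgM : forall x : gT, g (K1, x) = (K1, g'' x)) :
  forall X : LM gT, g X = Fminus g' g'' u v X.
Proof.
have mulgC : forall x y : gT, x * y = y * x.
  by move=> x y; apply: (centsP Mab); rewrite inE.
case: Hg => [[g_bij g_half] [not_aut _]]; have hM := Hg''.2.
move=> [A x]; have [-> | nA] := K1_or_neq1 A; first by rewrite HgM.
have [gx | //] := half_aut_Fplus_or_Fminus Hg' hM g_half HgK HgM (A, x).
have [x2 | x2] := eqVneq (g'' x ^+ 2) 1.
  by rewrite gx; apply/(Fplus_eq_Fminus _ _ _ mulgC hM).
have gFp := half_aut_Fplus_from_row mulgC Hu Hv Hg' hM g_half HgK HgM nA
  (half_aut_Fplus_on_row mulgC Hg' hM g_half HgK HgM nA (elimN eqP x2) gx).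
by exfalso; apply: not_aut; split=> // X Y; rewrite !gFp FplusM.
Qed.
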